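(* Every fractionally $\mathrm{tree}\text{-}\alpha$-fragile graph class has bounded induced biclique number.
   Context: $\alpha$ denotes independence number. The tree-independence number $\mathrm{tree}\text{-}\alpha(G)$ is the minimum over tree decompositions $(T,\{X_t\})$ of $G$ (tree $T$, bags covering vertices and edges, each vertex's bags forming a subtree) of $\max_t\alpha(G[X_t])$. For $\beta\le1$, a $\beta$-general cover of $G$ is a multiset $\mathcal{C}$ of subsets of $V(G)$ with each vertex in at least $\beta|\mathcal{C}|$ members. A class $\mathcal{G}$ (not necessarily hereditary) is fractionally $\mathrm{tree}\text{-}\alpha$-fragile if there is $f\colon\mathbb{N}\to\mathbb{N}$ such that for every $r\in\mathbb{N}$ every $G\in\mathcal{G}$ has a $(1-1/r)$-general cover $\mathcal{C}$ with $\mathrm{tree}\text{-}\alpha(G[C])\le f(r)$ for all $C\in\mathcal{C}$. The induced biclique number of $G$ is the maximum $n$ such that $K_{n,n}$ is an induced subgraph of $G$. *)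

From mathcomp Require Import all_boot.
Set Implicit Arguments. Unset Strict Implicit. Unset Printing Implicit Defensive.

Record graph := Graph {
  gV :> finType;
  gadj : rel gV;
  gadj_sym : symmetric gadj;
  gadj_irr : irreflexive gadj }.

Definition graph_class := graph -> Prop.

Section Induced.
Variables (G : graph) (C : {set G}).
Definition ind_V : finType := {x : G | x \in C}.
Definition ind_adj : rel ind_V := fun x y => gadj (val x) (val y).
Lemma ind_adj_sym : symmetric ind_adj.
Proof. by move=> x y; rewrite /ind_adj gadj_sym. Qed.
Lemma ind_adj_irr : irreflexive ind_adj.
Proof. by move=> x; rewrite /ind_adj gadj_irr. Qed.
Definition induced : graph := Graph ind_adj_sym ind_adj_irr.
End Induced.

Definition independent (G : graph) (A : {set G}) : bool :=
  [forall x in A, forall y in A, ~~ gadj x y].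

Definition alpha_of (G : graph) (S : {set G}) : nat :=
  \max_(A : {set G} | (A \subset S) && independent A) #|A|.

(* Finite trees: nonempty, connected, with exactly |I|-1 edges
   (edges counted as ordered pairs, hence the factor 2). *)
Definition is_tree (I : finType) (e : rel I) : Prop :=
  [/\ symmetric e, irreflexive e, 0 < #|I|,
      (forall s t : I, connect e s t) &
      #|[set p : I * I | e p.1 p.2]| = 2 * (#|I| - 1)].

Definition is_tree_decomposition (G : graph) (I : finType) (e : rel I)
    (X : I -> {set G}) : Prop :=
  [/\ is_tree e,
      (forall v : G, exists t, v \in X t),
      (forall u v : G, gadj u v -> exists t, (u \in X t) && (v \in X t)) &
      (forall (v : G) (s t : I), v \in X s -> v \in X t ->
         connect [rel a b | [&& e a b, v \in X a & v \in X b]] s t)].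

(* tree-alpha(G) <= k : some tree decomposition has all bags of
   independence number at most k (tree-alpha is the minimum over decompositions). *)
Definition tree_alpha_le (G : graph) (k : nat) : Prop :=
  exists (I : finType) (e : rel I) (X : I -> {set G}),
    is_tree_decomposition e X /\ forall t, alpha_of (X t) <= k.

(* A (1 - 1/r)-general cover (r >= 1): a nonempty multiset (here a seq) of
   vertex subsets with each vertex in at least (1 - 1/r)|C| members,
   i.e. r * #{C in cov | v in C} >= (r - 1) * |cov|. *)
Definition general_cover (G : graph) (r : nat) (cov : seq {set G}) : Prop :=
  0 < size cov /\
  forall v : G, (r - 1) * size cov <= r * count (fun C : {set G} => v \in C) cov.

Definition frac_tree_alpha_fragile (K : graph_class) : Prop :=
  exists f : nat -> nat, forall r : nat, 0 < r ->
    forall G : graph, K G ->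
      exists cov : seq {set G}, general_cover r cov /\
        forall C : {set G}, C \in cov -> tree_alpha_le (induced C) (f r).

Definition has_induced_biclique (G : graph) (n : nat) : Prop :=
  exists A B : {set G},
    [/\ #|A| = n, #|B| = n, [disjoint A & B],
        independent A /\ independent B &
        forall a b, a \in A -> b \in B -> gadj a b].

Definition bounded_induced_biclique (K : graph_class) : Prop :=
  exists N : nat, forall G : graph, K G ->
    forall n, has_induced_biclique G n -> n <= N.

(* The bags of a tree decomposition containing a given vertex form a subtree,
   and the subtrees of adjacent vertices meet.  If every vertex of A is
   adjacent to every vertex of B, this forces one bag to contain A or B:
   prune leaves of the tree until some vertex of A or B occurs only in a leaf
   bag; all its neighbours on the other side then lie in that bag.  So for
   independent A, B and tree-alpha(G[C]) <= k, min(|A :&: C|, |B :&: C|) <= k.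
   Averaging over a (3/4)-general cover gives a member C with
   4 (|A :\: C| + |B :\: C|) <= |A| + |B| = 2n, hence |A :&: C|, |B :&: C| >= n/2
   and n <= 2 f(4). *)

From mathcomp Require Import all_boot zify.
Set Implicit Arguments. Unset Strict Implicit. Unset Printing Implicit Defensive.

Lemma homo_connect (T : finType) (e e' : rel T) (h : T -> T) :
  (forall x y, e x y -> connect e' (h x) (h y)) ->
  forall x y, connect e x y -> connect e' (h x) (h y).
Proof.
move=> he x _ /connectP[p e_p ->]; elim: p x e_p => //= y p IHp x /andP[exy].
by move/IHp; apply: connect_trans; apply: he.
Qed.

Lemma connect_first_step (T : finType) (e : rel T) x y :
  connect e x y -> x != y -> exists z, e x z.
Proof.
case/connectP=> [[|z p] /= e_p ->]; first by rewrite eqxx.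
by case/andP: e_p => exz _ _; exists z.
Qed.

Section Tree.

Variables (I : finType) (e : rel I).
Hypotheses (e_sym : symmetric e) (e_irr : irreflexive e).
Implicit Types (U : {set I}) (l p : I).

Definition rel_on U : rel I := [rel x y | [&& e x y, x \in U & y \in U]].

Definition connected_on U := {in U &, forall s t, connect (rel_on U) s t}.

Definition arcs_on U : {set I * I} := [set q | rel_on U q.1 q.2].

Definition tree_on U :=
  [/\ 0 < #|U|, connected_on U & #|arcs_on U| = 2 * (#|U| - 1)].

Definition is_leaf U l p :=
  [/\ l \in U, p \in U, e l p & {in U, forall y, e l y -> y = p}].

Lemma card_arcs_on U : #|arcs_on U| = \sum_(x in U) #|[set y in U | e x y]|.
Proof.
rewrite -sum1_card (eq_bigr (fun x => \sum_(y in U | e x y) 1)); last first.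
  by move=> x _; rewrite -sum1_card; apply: eq_bigl => y; rewrite inE.
rewrite pair_big_dep /=.
by apply: eq_bigl => -[x y]; rewrite !inE /= /rel_on /= andbC -andbA.
Qed.

Lemma tree_on_leaf U : tree_on U -> 1 < #|U| -> exists l p, is_leaf U l p.
Proof.
case=> U_gt0 Ucon Uarcs /card_gt1P[x0 [y0 [x0U y0U x0y0]]].
have [l /andP[lU deg_l]] : exists l, (l \in U) && (#|[set y in U | e l y]| <= 1).
  apply/existsP; apply: contraT; rewrite negb_exists => /forallP deg_gt1.
  have : 2 * #|U| <= #|arcs_on U|.
    rewrite card_arcs_on mulnC -sum_nat_const; apply: leq_sum => x xU.
    by have := deg_gt1 x; rewrite xU ltnNge.
  rewrite Uarcs => ?; exfalso; lia.
have [t tU lt] : exists2 t, t \in U & l != t.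
  by case: (eqVneq l x0) => [->|]; [exists y0 | exists x0].
have [p lp] := connect_first_step (Ucon _ _ lU tU) lt.
exists l, p; have /and3P[elp _ pU] := lp; split => // y yU ely.
by move/card_le1_eqP: deg_l; apply; rewrite inE ?yU ?pU.
Qed.

Lemma leaf_neq U l p : is_leaf U l p -> l != p.
Proof. by case=> _ _ elp _; apply: contraTneq elp => <-; rewrite e_irr. Qed.

Lemma arcs_onD1 U l p :
  is_leaf U l p -> arcs_on U = (l, p) |: ((p, l) |: arcs_on (U :\ l)).
Proof.
move=> leaf; have [lU pU elp only_p] := leaf; have lp := leaf_neq leaf.
have nbr_l y : (e l y && (y \in U)) = (y == p).
  by apply/andP/eqP => [[ely yU]|->]; [exact: only_p|].
apply/setP => -[x y]; rewrite !inE /= !xpair_eqE /rel_on /= !inE.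
have [->|xl] := eqVneq x l; first by rewrite lU (negbTE lp) /= nbr_l !andbF !orbF.
have [->|yl] := eqVneq y l; last by rewrite /= !andbF.
by rewrite lU e_sym /= !andbT !andbF orbF nbr_l.
Qed.

Lemma card_arcs_onD1 U l p :
  is_leaf U l p -> #|arcs_on U| = #|arcs_on (U :\ l)|.+2.
Proof.
move=> leaf; have pl := leaf_neq leaf.
by rewrite (arcs_onD1 leaf) !cardsU1 !inE /= !xpair_eqE /rel_on /= !inE eqxx (negbTE pl) /= !andbF.
Qed.

(* Removing a leaf [l] keeps paths connected: a path through [l] enters and
   leaves it via [p], so mapping [l] to [p] yields a path avoiding [l]. *)
Lemma connected_onD1 U l p :
  {in U, forall y, e l y -> y = p} -> connected_on U -> connected_on (U :\ l).
Proof.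
move=> only_p Ucon s t; rewrite !inE => /andP[sl sU] /andP[tl tU].
pose h x := if x == l then p else x.
have -> : s = h s by rewrite /h (negbTE sl).
have -> : t = h t by rewrite /h (negbTE tl).
apply: homo_connect (Ucon _ _ sU tU) => x y /and3P[exy xU yU]; rewrite /h.
have [xl|xl] := eqVneq x l.
  by rewrite xl in exy; rewrite (only_p y) // if_same connect0.
have [yl|yl] := eqVneq y l.
  by rewrite yl e_sym in exy; rewrite (only_p x) // if_same connect0.
by apply: connect1; rewrite /rel_on /= !inE xl yl exy xU yU.
Qed.

Lemma tree_onD1 U l p : tree_on U -> is_leaf U l p -> tree_on (U :\ l).
Proof.
move=> [U_gt0 Ucon Uarcs] leaf; have [lU pU _ only_p] := leaf.
have cardU := cardsD1 l U; rewrite lU in cardU.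
split; last by have := card_arcs_onD1 leaf; lia.
- by apply/card_gt0P; exists p; rewrite !inE pU eq_sym (leaf_neq leaf).
- exact: connected_onD1 only_p Ucon.
Qed.

Variables (V : finType) (X : I -> {set V}).

Definition occurrence U v : {set I} := [set t in U | v \in X t].

Lemma occurrenceD1 U l v : occurrence (U :\ l) v = occurrence U v :\ l.
Proof. by apply/setP => t; rewrite !inE andbA. Qed.

Lemma occurrence_sub1 U l v w :
  occurrence U v \subset [set l] -> occurrence U v :&: occurrence U w != set0 ->
  w \in X l.
Proof.
move=> v_l /set0Pn[t]; rewrite inE => /andP[tv]; have := subsetP v_l t tv.
by rewrite !inE => /eqP-> /andP[].
Qed.

Lemma leaf_occurrence U l p v :
  is_leaf U l p -> connected_on (occurrence U v) -> l \in occurrence U v ->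
  occurrence U v :\ l != set0 -> p \in occurrence U v.
Proof.
move=> [_ _ _ only_p] v_con lv /set0Pn[t]; rewrite in_setD1 => /andP[tl tv].
have lt : l != t by rewrite eq_sym.
have [y /and3P[ely _ yv]] := connect_first_step (v_con _ _ lv tv) lt.
by move: (yv); rewrite inE => /andP[yU _]; rewrite -(only_p y).
Qed.

Lemma occurrence_meetD1 U l p v w :
  is_leaf U l p ->
  connected_on (occurrence U v) -> connected_on (occurrence U w) ->
  occurrence U v :\ l != set0 -> occurrence U w :\ l != set0 ->
  occurrence U v :&: occurrence U w != set0 ->
  (occurrence U v :&: occurrence U w) :\ l != set0.
Proof.
move=> leaf v_con w_con v_l w_l /set0Pn[t tvw]; apply/set0Pn.
have [tl | tl] := eqVneq t l; last by exists t; rewrite in_setD1 tl.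
move: tvw; rewrite tl in_setI => /andP[lv lw]; exists p.
by rewrite in_setD1 in_setI eq_sym (leaf_neq leaf) !(leaf_occurrence leaf).
Qed.

(* Either some vertex of A or B occurs only in the leaf bag, or the leaf can
   be pruned: two subtrees meeting only at the leaf both reach its neighbour. *)
Lemma tree_on_biclique_bag U (A B : {set V}) :
  tree_on U ->
  {in A :|: B, forall v, occurrence U v != set0} ->
  {in A :|: B, forall v, connected_on (occurrence U v)} ->
  {in A & B, forall a b, occurrence U a :&: occurrence U b != set0} ->
  exists2 t, t \in U & (A \subset X t) || (B \subset X t).
Proof.
have [n] := ubnP #|U|; elim: n => // n IHn in U *; rewrite ltnS => Un.
move=> Utree occ0 occ_con occ_meet.
have [U_le1|U_gt1] := leqP #|U| 1.
  have [U_gt0 _ _] := Utree.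
  have /cards1P[t0 U1] : #|U| == 1 by rewrite eqn_leq U_le1.
  exists t0; first by rewrite U1 set11.
  apply/orP; left; apply/subsetP => a aA.
  have aAB : a \in A :|: B by rewrite inE aA.
  have /set0Pn[t] := occ0 a aAB.
  by rewrite inE U1 inE => /andP[/eqP <-].
have [l [p leaf]] := tree_on_leaf Utree U_gt1; have [lU _ _ only_p] := leaf.
case: (boolP [exists v in A :|: B, occurrence U v \subset [set l]]).
  case/exists_inP => v; rewrite inE => /orP[vA|vB] v_l; exists l => //; apply/orP.
    by right; apply/subsetP => b bB; apply: occurrence_sub1 v_l (occ_meet v b vA bB).
  left; apply/subsetP => a aA; apply: occurrence_sub1 v_l _.
  by rewrite setIC; apply: occ_meet.
rewrite negb_exists_in => /forall_inP occ_l.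
have occD1_0 v : v \in A :|: B -> occurrence U v :\ l != set0.
  by move=> vAB; rewrite setD_eq0; apply: occ_l.
suff [t] : exists2 t, t \in U :\ l & (A \subset X t) || (B \subset X t).
  by rewrite inE => /andP[_ tU]; exists t.
apply: (IHn (U :\ l) _ (tree_onD1 Utree leaf)).
- by move: Un; rewrite (cardsD1 l U) lU.
- by move=> v vAB; rewrite occurrenceD1 occD1_0.
- move=> v vAB; rewrite occurrenceD1; apply: connected_onD1 (occ_con v vAB).
  by move=> y; rewrite inE => /andP[yU _]; apply: only_p.
- move=> a b aA bB; rewrite !occurrenceD1 -setDIl.
  have aAB : a \in A :|: B by rewrite inE aA.
  have bAB : b \in A :|: B by rewrite inE bB orbT.
  exact: (occurrence_meetD1 leaf (occ_con a aAB) (occ_con b bAB)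
    (occD1_0 a aAB) (occD1_0 b bAB) (occ_meet a b aA bB)).
Qed.

End Tree.

Lemma tree_decomposition_biclique_bag (G : graph) (I : finType) (e : rel I)
    (X : I -> {set G}) (A B : {set G}) :
  is_tree_decomposition e X -> {in A & B, forall a b, gadj a b} ->
  exists t, (A \subset X t) || (B \subset X t).
Proof.
case=> [[e_sym e_irr I_gt0 e_con e_arcs] X_cov X_edge X_con] AB.
have rel_onT : rel_on e [set: I] =2 e by move=> x y; rewrite /rel_on /= !inE !andbT.
have Ttree : tree_on e [set: I].
  split; first by rewrite cardsT.
  - by move=> s t _ _; rewrite (eq_connect rel_onT) e_con.
  - by rewrite cardsT -e_arcs; apply: eq_card => q; rewrite !inE rel_onT.
suff [t _] : exists2 t, t \in [set: I] & (A \subset X t) || (B \subset X t).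
  by exists t.
apply: (tree_on_biclique_bag e_sym e_irr Ttree) => [v _ | v _ s t | a b aA bB].
- by have [t vt] := X_cov v; apply/set0Pn; exists t; rewrite !inE.
- have occ_rel : rel_on e (occurrence X [set: I] v) =2
      [rel a b | [&& e a b, v \in X a & v \in X b]].
    by move=> x y; rewrite /rel_on /= !inE.
  by rewrite !inE (eq_connect occ_rel); apply: X_con.
- have [t /andP[aXt bXt]] := X_edge a b (AB a b aA bB).
  by apply/set0Pn; exists t; rewrite !inE aXt bXt.
Qed.

Lemma alpha_of_ge (G : graph) (S A : {set G}) :
  A \subset S -> independent A -> #|A| <= alpha_of S.
Proof. by move=> AS indA; apply: leq_bigmax_cond; rewrite AS indA. Qed.

Lemma tree_alpha_le_biclique (G : graph) k (A B : {set G}) :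
  tree_alpha_le G k -> independent A -> independent B ->
  {in A & B, forall a b, gadj a b} -> minn #|A| #|B| <= k.
Proof.
move=> [I [e [X [Xdec Xalpha]]]] indA indB AB.
have [t /orP[AXt|BXt]] := tree_decomposition_biclique_bag Xdec AB.
- by rewrite geq_min (leq_trans (alpha_of_ge AXt indA) (Xalpha t)).
- by rewrite geq_min (leq_trans (alpha_of_ge BXt indB) (Xalpha t)) orbT.
Qed.

Definition induced_set (G : graph) (C A : {set G}) : {set induced C} :=
  [set x | val x \in A].

Lemma card_induced_set (G : graph) (C A : {set G}) :
  #|induced_set C A| = #|A :&: C|.
Proof.
rewrite -(card_imset _ val_inj); apply: eq_card => v; rewrite inE.
apply/imsetP/andP => [[x] | [vA vC]]; first by rewrite inE => xA ->; split; last exact: valP.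
by exists (exist _ v vC); rewrite ?inE.
Qed.

Lemma independent_induced_set (G : graph) (C A : {set G}) :
  independent A -> independent (induced_set C A).
Proof.
move/forall_inP=> indA; apply/forall_inP => x; rewrite inE => xA.
by apply/forall_inP => y; rewrite inE => yA; have /forall_inP := indA _ xA; apply.
Qed.

Lemma general_cover_count_notin (G : graph) r cov (v : G) :
  general_cover r cov -> r * count (fun C : {set G} => v \notin C) cov <= size cov.
Proof.
case=> _ /(_ v); have := count_predC (fun C : {set G} => v \in C) cov.
change (count (predC (fun C : {set G} => v \in C)) cov) with
  (count (fun C : {set G} => v \notin C) cov); nia.
Qed.

Lemma general_cover_sum_cardD (G : graph) r cov (A : {set G}) :
  general_cover r cov -> r * \sum_(C <- cov) #|A :\: C| <= #|A| * size cov.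
Proof.
move=> cover.
have -> : \sum_(C <- cov) #|A :\: C| = \sum_(v in A) count (fun C : {set G} => v \notin C) cov.
  rewrite (eq_bigr (fun C : {set G} => \sum_(v in A | v \notin C) 1)); last first.
    by move=> C _; rewrite -sum1_card; apply: eq_bigl => v; rewrite !inE andbC.
  rewrite (exchange_big_dep (mem A)) /=; last by move=> C v _ /andP[].
  by apply: eq_bigr => v vA; rewrite -sum1_count; apply: eq_bigl => C; rewrite vA.
rewrite big_distrr -sum_nat_const /=; apply: leq_sum => v _.
exact: general_cover_count_notin.
Qed.

Lemma exists_le_average (T : eqType) (s : seq T) (F : T -> nat) c :
  0 < size s -> \sum_(x <- s) F x <= c * size s -> exists2 x, x \in s & F x <= c.
Proof.
move=> s_gt0 sumF; apply/hasP; apply: contraLR sumF; rewrite -all_predC => /allP F_gt.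
have : \sum_(x <- s) c.+1 <= \sum_(x <- s) F x.
  rewrite big_seq [leqRHS]big_seq; apply: leq_sum => x xs.
  by have := F_gt x xs; rewrite /= -ltnNge.
rewrite big_const_seq count_predT iter_addn_0 -ltnNge; nia.
Qed.

Lemma general_cover_exists_mostly_covering (G : graph) r cov (A B : {set G}) :
  general_cover r cov ->
  exists2 C, C \in cov & r * (#|A :\: C| + #|B :\: C|) <= #|A| + #|B|.
Proof.
move=> cover; have [cov_gt0 _] := cover.
apply: exists_le_average => //; rewrite -big_distrr big_split /= mulnDr mulnDl.
by rewrite leq_add // general_cover_sum_cardD.
Qed.

Theorem lemma5p5 (K : graph_class) :
  frac_tree_alpha_fragile K -> bounded_induced_biclique K.
Proof.
move=> [f fragile]; exists (2 * f 4) => G KG n [A [B [cardA cardB _ [indA indB] AB]]].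
have [cov [cover cov_tree_alpha]] := fragile 4 isT G KG.
have [C covC mostly] := general_cover_exists_mostly_covering A B cover.
have biclique_C : {in induced_set C A & induced_set C B, forall x y, gadj x y}.
  by move=> x y; rewrite !inE; apply: AB.
have := tree_alpha_le_biclique (cov_tree_alpha C covC)
  (independent_induced_set C indA) (independent_induced_set C indB) biclique_C.
rewrite !card_induced_set; have := cardsID C A; have := cardsID C B; lia.
Qed.
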